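(* Let $\mathcal{R}=(\mathcal{W},\mathcal{R}_1,\mathcal{R}_2)$ with $\mathcal{W}=\{1,\dots,m\}$, let $\mathcal{S}$, $L$, $K_1,\dots,K_4$ be constructed from $\mathcal{R}$ as below, and let $\mathcal{T}$ be a solution to the $\mathcal{S}$-cyclic triomino problem. Fix $s\in\mathbb{Z}^2$. If $q(s,i)$ holds for some $1\le i\le 4$, then $q(s,i)$ holds for every $1\le i\le 4$.
   Context: A domino set is $\mathcal{R}=(\mathcal{W},\mathcal{R}_1,\mathcal{R}_2)$ with $\mathcal{W}$ non-empty finite and $\mathcal{R}_1,\mathcal{R}_2\subset\mathcal{W}^2$; here $\mathcal{W}=\{1,\dots,m\}$. Let $u_1=(1,0),u_2=(0,1),u_3=(-1,0),u_4=(0,-1)$, indices mod 4. Fix $n\ge 2m+1$ and regard integers as elements of $\mathbb{Z}_n$. Let $L=\{(w,0,0): w\in\mathcal{W}\}$, $K_1=L\cup\{(0,b,a):(a,b)\in\mathcal{R}_1\}$, $K_2=L\cup\{(0,a,b):(a,b)\in\mathcal{R}_2\}$, $K_3=L\cup\{(0,a,b):(a,b)\in\mathcal{R}_1\}$, $K_4=L\cup\{(0,b,a):(a,b)\in\mathcal{R}_2\}$, with $K_{i+4}=K_i$. Let $\mathcal{V}=\mathbb{Z}_n$, $\mathcal{S}_i=\{(a+k,b+k,c+k):(a,b,c)\in K_i, k\in\mathcal{V}\}$, $\mathcal{S}_{i+4}=\mathcal{S}_i$, and $\mathcal{S}=(\mathcal{V},\mathcal{S}_1,\dots,\mathcal{S}_4)$.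 A solution to the $\mathcal{S}$-cyclic triomino problem is a function $\mathcal{T}:\mathbb{Z}^2\to\mathcal{V}$ with $(\mathcal{T}(s),\mathcal{T}(s+u_i),\mathcal{T}(s+u_{i+1}))\in\mathcal{S}_i$ for all $s$ and $1\le i\le 4$. For $s\in\mathbb{Z}^2$, $i\in\mathbb{Z}$, $p(s,i)$ is the statement $(\mathcal{T}(s),\mathcal{T}(s+u_i),\mathcal{T}(s+u_{i+1}))\in L$ and $q(s,i)$ is the statement $(\mathcal{T}(s),\mathcal{T}(s+u_i),\mathcal{T}(s+u_{i+1}))\in K_i\setminus L$. *)

From mathcomp Require Import all_boot all_order all_algebra.
Set Implicit Arguments. Unset Strict Implicit. Unset Printing Implicit Defensive.
Import GRing.Theory Num.Theory.
Local Open Scope ring_scope.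

(* Vertices V = Z_n, represented by 'Z_n (the hypothesis n >= 2m+1, m >= 1
   ensures n >= 3, so 'Z_n is genuinely Z/nZ). *)
Definition triple (n : nat) := ('Z_n * 'Z_n * 'Z_n)%type.

Definition u (i : nat) : int * int :=
  match (i %% 4)%N with
  | 1 => (1, 0)
  | 2 => (0, 1)
  | 3 => (-1, 0)
  | _ => (0, -1)
  end.

Definition addp (s t : int * int) : int * int := (s.1 + t.1, s.2 + t.2).

Definition Lset (n m : nat) (t : triple n) : Prop :=
  exists w : nat, (1 <= w <= m)%N /\ t = (w%:R, 0, 0).

Definition Kset (n m : nat) (R1 R2 : nat -> nat -> Prop) (i : nat)
    (t : triple n) : Prop :=
  Lset m t \/
  match (i %% 4)%N with
  | 1 => exists a b, R1 a b /\ t = (0, b%:R, a%:R)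
  | 2 => exists a b, R2 a b /\ t = (0, a%:R, b%:R)
  | 3 => exists a b, R1 a b /\ t = (0, a%:R, b%:R)
  | _ => exists a b, R2 a b /\ t = (0, b%:R, a%:R)
  end.

Definition Sset (n m : nat) (R1 R2 : nat -> nat -> Prop) (i : nat)
    (t : triple n) : Prop :=
  exists (a b c k : 'Z_n), Kset m R1 R2 i (a, b, c) /\
    t = (a + k, b + k, c + k).

Definition trip (n : nat) (T : int * int -> 'Z_n) (s : int * int) (i : nat)
    : triple n :=
  (T s, T (addp s (u i)), T (addp s (u i.+1))).

Definition is_solution (n m : nat) (R1 R2 : nat -> nat -> Prop)
    (T : int * int -> 'Z_n) : Prop :=
  forall (s : int * int) (i : nat), (1 <= i <= 4)%N ->
    Sset m R1 R2 i (trip T s i).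

Definition q (n m : nat) (R1 R2 : nat -> nat -> Prop)
    (T : int * int -> 'Z_n) (s : int * int) (i : nat) : Prop :=
  Kset m R1 R2 i (trip T s i) /\ ~ Lset m (trip T s i).

(* A translate of a triple of S_i whose first entry is 0 and whose second entry
   lies in W already lies in K_i \ L: a translate (w + k, k, k) of a triple of L
   would give w + w' = 0 in Z_n with 2 <= w + w' <= 2m < n, and a translate of a
   domino triple (0, b, a) with first entry 0 is the triple itself.  The third
   entry of the i-th triple at s is the second entry of the (i+1)-th one, so
   q(s, i) propagates to q(s, i+1) and hence, cyclically, to every index. *)
From mathcomp Require Import all_boot all_order all_algebra.
From mathcomp Require Import zify.
Import GRing.Theory.
Local Open Scope ring_scope.
Set Implicit Arguments. Unset Strict Implicit.

Lemma natr_Zp_neq0 (n k : nat) : (1 < n)%N -> (0 < k < n)%N -> (k%:R : 'Z_n) != 0.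
Proof.
move=> n_gt1 k_bd; apply/eqP => k0.
by have := val_Zp_nat n_gt1 k; rewrite k0 modn_small //=; lia.
Qed.

Lemma u_congr4 (j j' : nat) : j = j' %[mod 4] -> u j = u j'.
Proof. by move=> E; rewrite /u E. Qed.

Lemma trip_congr4 n (T : int * int -> 'Z_n) s j j' :
  j = j' %[mod 4] -> trip T s j = trip T s j'.
Proof.
by move=> E; rewrite /trip (u_congr4 E) (@u_congr4 j.+1 j'.+1) //; lia.
Qed.

Lemma Sset_congr4 n m R1 R2 j j' (t : triple n) :
  j = j' %[mod 4] -> Sset m R1 R2 j t = Sset m R1 R2 j' t.
Proof. by move=> E; rewrite /Sset /Kset E. Qed.

Lemma q_congr4 n m R1 R2 (T : int * int -> 'Z_n) s j j' :
  j = j' %[mod 4] -> q m R1 R2 T s j -> q m R1 R2 T s j'.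
Proof. by move=> E; rewrite /q (trip_congr4 T s E) /Kset E. Qed.

Lemma is_solution_Sset n m R1 R2 (T : int * int -> 'Z_n) :
  is_solution m R1 R2 T -> forall s j, Sset m R1 R2 j (trip T s j).
Proof.
move=> solT s j; have E : j = (j + 3) %% 4 + 1 %[mod 4] by lia.
by rewrite (trip_congr4 T s E) (Sset_congr4 _ _ _ _ E); apply: solT; lia.
Qed.

Section OneCell.

Variables (m n : nat) (R1 R2 : nat -> nat -> Prop).
Hypothesis n_gt2m : (2 * m + 1 <= n)%N.
Hypothesis hR1 : forall a b, R1 a b -> (1 <= a <= m)%N /\ (1 <= b <= m)%N.
Hypothesis hR2 : forall a b, R2 a b -> (1 <= a <= m)%N /\ (1 <= b <= m)%N.

Definition in_W (v : 'Z_n) : Prop := exists2 w, (1 <= w <= m)%N & v = w%:R.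

(* The second disjunct of [Kset]: [Kset m R1 R2 j t] is convertible to
   [Lset m t \/ Kdomino j t]. *)
Definition Kdomino (j : nat) (t : triple n) : Prop :=
  match (j %% 4)%N with
  | 1 => exists a b, R1 a b /\ t = (0, b%:R, a%:R)
  | 2 => exists a b, R2 a b /\ t = (0, a%:R, b%:R)
  | 3 => exists a b, R1 a b /\ t = (0, a%:R, b%:R)
  | _ => exists a b, R2 a b /\ t = (0, b%:R, a%:R)
  end.

Lemma Kdomino_shape j (t : triple n) :
  Kdomino j t -> [/\ t.1.1 = 0, in_W t.1.2 & in_W t.2].
Proof.
have domino_in_W a b : R1 a b \/ R2 a b -> in_W a%:R /\ in_W b%:R.
  by case=> [/hR1|/hR2] [ha hb]; split; [exists a | exists b | exists a | exists b].
rewrite /Kdomino; case: (j %% 4)%N => [|[|[|[|?]]]] [a [b [Rab ->]]];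
  by have [] := domino_in_W a b ltac:(first [by left | by right]).
Qed.

Lemma Lset_head_neq0 (t : triple n) : Lset m t -> t.1.1 != 0.
Proof. by case=> w [hw ->]; apply: natr_Zp_neq0; lia. Qed.

Lemma Kset_notL_shape j (t : triple n) : Kset m R1 R2 j t -> ~ Lset m t ->
  [/\ t.1.1 = 0, in_W t.1.2 & in_W t.2].
Proof. by case=> [//|/Kdomino_shape]. Qed.

Lemma Sset_head0_KnotL j (t : triple n) : Sset m R1 R2 j t ->
  t.1.1 = 0 -> in_W t.1.2 -> Kset m R1 R2 j t /\ ~ Lset m t.
Proof.
case=> a [b [c [k [Kabc ->]]]] /=.
case: Kabc => [[w [hw [-> -> ->]]] | Kd] a_k0 [w' hw' k_w'].
  rewrite add0r in k_w'; rewrite k_w' -natrD in a_k0.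
  by have /eqP := natr_Zp_neq0 (n := n) (k := w + w') ltac:(lia) ltac:(lia).
have [/= a0 _ _] := Kdomino_shape Kd.
have -> : k = 0 by rewrite -a_k0 a0 add0r.
rewrite !addr0; split; first by right.
by move/Lset_head_neq0; rewrite /= a0 eqxx.
Qed.

Variables (T : int * int -> 'Z_n) (s : int * int).
Hypothesis solT : is_solution m R1 R2 T.

Lemma q_succ i : q m R1 R2 T s i -> q m R1 R2 T s i.+1.
Proof.
case=> /Kset_notL_shape KnotL /KnotL [/= Ts0 _ W_next].
exact: Sset_head0_KnotL (is_solution_Sset solT s i.+1) Ts0 W_next.
Qed.

Lemma q_addn i k : q m R1 R2 T s i -> q m R1 R2 T s (i + k).
Proof.
move=> qi; elim: k => [|k IHk]; first by rewrite addn0.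
by rewrite addnS; apply: q_succ.
Qed.

End OneCell.

Theorem lemma3p3 (m n : nat) (R1 R2 : nat -> nat -> Prop)
  (hm : (1 <= m)%N) (hn : (2 * m + 1 <= n)%N)
  (hR1 : forall a b, R1 a b -> (1 <= a <= m)%N /\ (1 <= b <= m)%N)
  (hR2 : forall a b, R2 a b -> (1 <= a <= m)%N /\ (1 <= b <= m)%N)
  (T : int * int -> 'Z_n)
  (hT : is_solution m R1 R2 T)
  (s : int * int) :
  (exists i, (1 <= i <= 4)%N /\ q m R1 R2 T s i) ->
  forall i, (1 <= i <= 4)%N -> q m R1 R2 T s i.
Proof.
move=> [i0 [_ q_i0]] i _.
have E : i0 + (4 - i0 %% 4 + i) = i %[mod 4] by lia.
exact: q_congr4 E (q_addn hn hR1 hR2 hT _ q_i0).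
Qed.
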